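(* $M\otimes-$ is a functor on $\mathsf{SquaMS}$: for every square metric space $X$, the quotient distance on $M\otimes X$ is a metric, $(M\otimes X,S_{M\otimes X})$ is a square metric space, and for every morphism $f\colon X\to Y$ of $\mathsf{SquaMS}$, $M\otimes f$ is a morphism $M\otimes X\to M\otimes Y$; moreover identities and composition are preserved.
   Context: Let $M_0=\{(r,s)\in[0,1]^2: r\in\{0,1\}\text{ or } s\in\{0,1\}\}$. A square metric space is a pair $(X,S_X)$ with $X$ a metric space with all distances at most $2$ and $S_X\colon M_0\to X$ injective such that (sq1) for $i\in\{0,1\}$, $r,s\in[0,1]$: $d_X(S_X(i,r),S_X(i,s))=|s-r|$ and $d_X(S_X(r,i),S_X(s,i))=|s-r|$; (sq2) $d_X(S_X(r,s),S_X(t,u))\ge|r-t|+|s-u|$. $\mathsf{SquaMS}$: these objects, with short maps $f$ satisfying $f\circ S_X=S_Y$ as morphisms. Let $N=\{0,1,2\}^2$, $M=N\setminus\{(1,1)\}$, also viewed as points of $\mathbb{R}^2$. For $X$ in $\mathsf{SquaMS}$, $M\otimes X=(M\times X)/\!\sim$, where $\sim$ is the equivalence relation generated by $(m,S_X(p))\sim(n,S_X(q))$ whenever $m,n\in M$ differ by exactly $1$ in exactly one coordinate and $(m+p)/3=(n+q)/3$ in $\mathbb{R}^2$; $m\otimes x$ is the class of $(m,x)$. On $M\times X$ put $d((a,u),(b,v))=\frac13 d_X(u,v)$ if $a=b$ and $2$ otherwise; the quotient distance $d(m\otimes x,n\otimes y)$ is the infimum over finite sequences $(m,x)=z_0,\dots,z_k=(n,y)$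 in $M\times X$ of the sum over consecutive pairs of $0$ if they are $\sim$-related and $d(z_i,z_{i+1})$ otherwise. $S_{M\otimes X}(p)=m\otimes S_X(3p-m)$ for any $m\in M$ with $p\in(m+[0,1]^2)/3$, and $(M\otimes f)(m\otimes x)=m\otimes f(x)$. *)

From Stdlib Require Import Reals Lra Relations ClassicalEpsilon.
From Coquelicot Require Import Coquelicot.
Open Scope R_scope.

Definition inI (r : R) : Prop := 0 <= r <= 1.
Definition inM0 (p : R * R) : Prop :=
  inI (fst p) /\ inI (snd p) /\
  (fst p = 0 \/ fst p = 1 \/ snd p = 0 \/ snd p = 1).

Record IsMetric (T : Type) (d : T -> T -> R) : Prop := {
  met_nonneg : forall x y, 0 <= d x y;
  met_zero   : forall x y, d x y = 0 <-> x = y;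
  met_sym    : forall x y, d x y = d y x;
  met_tri    : forall x y z, d x z <= d x y + d y z }.

Record IsSqMS (T : Type) (d : T -> T -> R) (S : R * R -> T) : Prop := {
  sq_metric : IsMetric T d;
  sq_bound  : forall x y, d x y <= 2;
  sq_inj    : forall p q, inM0 p -> inM0 q -> S p = S q -> p = q;
  sq1_v : forall (i r s : R), (i = 0 \/ i = 1) -> inI r -> inI s ->
            d (S (i, r)) (S (i, s)) = Rabs (s - r);
  sq1_h : forall (i r s : R), (i = 0 \/ i = 1) -> inI r -> inI s ->
            d (S (r, i)) (S (s, i)) = Rabs (s - r);
  sq2 : forall p q, inM0 p -> inM0 q ->
            d (S p) (S q) >= Rabs (fst p - fst q) + Rabs (snd p - snd q) }.

Record SqMS : Type := {
  car : Type;
  sqd : car -> car -> R;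
  sqS : R * R -> car;
  sq_ax : IsSqMS car sqd sqS }.

Definition IsHom (T U : Type) (dT : T -> T -> R) (dU : U -> U -> R)
  (ST : R * R -> T) (SU : R * R -> U) (f : T -> U) : Prop :=
  (forall a b, dU (f a) (f b) <= dT a b) /\
  (forall p, inM0 p -> f (ST p) = SU p).

(* ---------- M = {0,1,2}^2 \ {(1,1)} ---------- *)
Inductive Mpt : Type := m00 | m01 | m02 | m10 | m12 | m20 | m21 | m22.
Definition Mpt_eq_dec (a b : Mpt) : {a = b} + {a <> b}.
Proof. decide equality. Defined.
Definition mx (m : Mpt) : R :=
  match m with m00 | m01 | m02 => 0 | m10 | m12 => 1 | _ => 2 end.
Definition my (m : Mpt) : R :=
  match m with m00 | m10 | m20 => 0 | m01 | m21 => 1 | _ => 2 end.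

Definition adjM (m n : Mpt) : Prop :=
  (mx m = mx n /\ Rabs (my m - my n) = 1) \/
  (my m = my n /\ Rabs (mx m - mx n) = 1).

Section Tensor.
Variable X : SqMS.
Let T := car X.
Let dX := sqd X.
Let SX := sqS X.

Definition rel0 (z w : Mpt * T) : Prop :=
  exists p q, inM0 p /\ inM0 q /\ adjM (fst z) (fst w) /\
    snd z = SX p /\ snd w = SX q /\
    (mx (fst z) + fst p) / 3 = (mx (fst w) + fst q) / 3 /\
    (my (fst z) + snd p) / 3 = (my (fst w) + snd q) / 3.

Definition tsim : relation (Mpt * T) := clos_refl_sym_trans _ rel0.

Definition dMX (z w : Mpt * T) : R :=
  if Mpt_eq_dec (fst z) (fst w) then / 3 * dX (snd z) (snd w) else 2.

Definition step_cost (a b : Mpt * T) (s : R) : Prop :=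
  (tsim a b /\ s = 0) \/ (~ tsim a b /\ s = dMX a b).

Inductive ChainCost : Mpt * T -> Mpt * T -> R -> Prop :=
| cc_nil : forall z, ChainCost z z 0
| cc_cons : forall z0 z1 w s c,
    step_cost z0 z1 s -> ChainCost z1 w c -> ChainCost z0 w (s + c).

Definition qdist (z w : Mpt * T) : R := real (Glb_Rbar (fun c => ChainCost z w c)).

Definition MT : Type := { P : Mpt * T -> Prop | exists z, P = tsim z }.
Definition cls (z : Mpt * T) : MT := exist _ (tsim z) (ex_intro _ z eq_refl).
Definition rep (c : MT) : Mpt * T :=
  proj1_sig (constructive_indefinite_description _ (proj2_sig c)).

Definition MTdist (c c' : MT) : R := qdist (rep c) (rep c').

Definition InCell (m : Mpt) (p : R * R) : Prop :=
  mx m <= 3 * fst p <= mx m + 1 /\ my m <= 3 * snd p <= my m + 1.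

Definition cellOf (p : R * R) : Mpt := epsilon (inhabits m00) (fun m => InCell m p).

Definition MTS (p : R * R) : MT :=
  let m := cellOf p in cls (m, SX (3 * fst p - mx m, 3 * snd p - my m)).

End Tensor.

Definition MTmap (X Y : SqMS) (f : car X -> car Y) (c : MT X) : MT Y :=
  cls Y (fst (rep X c), f (snd (rep X c))).

From Stdlib Require Import Reals Lra Relations ClassicalEpsilon
  ProofIrrelevance FunctionalExtensionality PropExtensionality.
From Coquelicot Require Import Coquelicot.
Open Scope R_scope.

(* The chain infimum is a pseudometric vanishing on ~-related pairs; the point is the converse.
   Copy m of X sits in the big square as (m + [0,1]^2)/3, and glued boundary points have the same
   position there.  By (sq2) and the bound 2 on distances, the l1-distance between positions of
   boundary points never exceeds the cost of a chain joining them; this separates them and gives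
   (sq2) for M (x) X.  A point v off the boundary keeps a positive distance from the compact set
   S_X(M0), which yields a potential separating v from everything else.  Axiom (sq1) holds on
   each third of an edge, inside a single copy, and the triangle inequality glues the thirds. *)

Lemma Glb_Rbar_nonneg_spec (E : R -> Prop) :
  (exists c, E c) -> (forall c, E c -> 0 <= c) ->
  (forall c, E c -> real (Glb_Rbar E) <= c) /\
  (forall L, (forall c, E c -> L <= c) -> L <= real (Glb_Rbar E)).
Proof.
  intros [c0 Hc0] Hpos. destruct (Glb_Rbar_correct E) as [Hlb Hglb].
  destruct (Glb_Rbar E) as [g| |].
  - split; [intros c Ec; exact (Hlb c Ec) | intros L HL; exact (Hglb L HL)].
  - exfalso. exact (Hlb c0 Hc0).
  - exfalso. exact (Hglb 0 Hpos).
Qed.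

Lemma short_continuity_pt (f : R -> R) :
  (forall x y, Rabs (f x - f y) <= Rabs (x - y)) -> forall x, continuity_pt f x.
Proof.
  intros Hf x eps Heps. exists eps. split; [exact Heps|].
  intros y [_ Hy]. simpl in *. unfold R_dist in *. pose proof (Hf y x). lra.
Qed.

Definition clamp01 (t : R) : R := Rmax 0 (Rmin 1 t).

Lemma clamp01_inI t : inI (clamp01 t).
Proof. unfold clamp01, inI, Rmax, Rmin. repeat destruct Rle_dec; lra. Qed.

Lemma clamp01_id t : inI t -> clamp01 t = t.
Proof. unfold clamp01, inI, Rmax, Rmin. intros. repeat destruct Rle_dec; lra. Qed.

Lemma clamp01_short t t' : Rabs (clamp01 t - clamp01 t') <= Rabs (t - t').
Proof. unfold clamp01, Rmax, Rmin. repeat destruct Rle_dec; split_Rabs; lra. Qed.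

Lemma short_on_union (f : R -> R -> R) (a b c : R) :
  (forall r s t, f r t <= f r s + f s t) ->
  (forall r s, a <= r <= b -> a <= s <= b -> f r s <= Rabs (s - r)) ->
  (forall r s, b <= r <= c -> b <= s <= c -> f r s <= Rabs (s - r)) ->
  forall r s, a <= r <= c -> a <= s <= c -> f r s <= Rabs (s - r).
Proof.
  intros Htri Hab Hbc r s Hr Hs.
  destruct (Rle_dec r b), (Rle_dec s b).
  - apply Hab; lra.
  - pose proof (Htri r b s). pose proof (Hab r b). pose proof (Hbc b s).
    split_Rabs; lra.
  - pose proof (Htri r b s). pose proof (Hbc r b). pose proof (Hab b s).
    split_Rabs; lra.
  - apply Hbc; lra.
Qed.

Lemma short_by_thirds (f : R -> R -> R) :
  (forall r s t, f r t <= f r s + f s t) ->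
  (forall k r s, (k = 0 \/ k = 1 \/ k = 2) ->
     k / 3 <= r <= (k + 1) / 3 -> k / 3 <= s <= (k + 1) / 3 -> f r s <= Rabs (s - r)) ->
  forall r s, inI r -> inI s -> f r s <= Rabs (s - r).
Proof.
  intros Htri Hk r s. unfold inI.
  apply (short_on_union f 0 (2 / 3) 1); auto; [|intros; apply (Hk 2); lra].
  apply (short_on_union f 0 (1 / 3) (2 / 3)); auto; intros.
  - apply (Hk 0); lra.
  - apply (Hk 1); lra.
Qed.

Definition gpos (m : Mpt) (a : R * R) : R * R := ((mx m + fst a) / 3, (my m + snd a) / 3).
Definition lpos (m : Mpt) (p : R * R) : R * R := (3 * fst p - mx m, 3 * snd p - my m).
Definition l1dist (p q : R * R) : R := Rabs (fst p - fst q) + Rabs (snd p - snd q).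

Lemma gpos_lpos m p : gpos m (lpos m p) = p.
Proof. destruct p. unfold gpos, lpos; simpl. f_equal; field. Qed.

Lemma l1dist_tri p q r : l1dist p r <= l1dist p q + l1dist q r.
Proof. unfold l1dist. split_Rabs; lra. Qed.

Lemma l1dist_le0 p q : l1dist p q <= 0 -> p = q.
Proof. destruct p, q. unfold l1dist; simpl. intros. f_equal; split_Rabs; lra. Qed.

Lemma l1dist_gpos m a b : l1dist (gpos m a) (gpos m b) = l1dist a b / 3.
Proof. unfold l1dist, gpos; simpl. split_Rabs; lra. Qed.

Lemma l1dist_gpos_le2 m a n b : inM0 a -> inM0 b -> l1dist (gpos m a) (gpos n b) <= 2.
Proof.
  intros (Ha1 & Ha2 & _) (Hb1 & Hb2 & _). unfold inI in *.
  unfold l1dist, gpos; destruct m, n; simpl; split_Rabs; lra.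
Qed.

Lemma inM0_vertical i t : (i = 0 \/ i = 1) -> inI t -> inM0 (i, t).
Proof. unfold inM0, inI; simpl. lra. Qed.

Lemma inM0_horizontal i t : (i = 0 \/ i = 1) -> inI t -> inM0 (t, i).
Proof. unfold inM0, inI; simpl. lra. Qed.

Lemma InCell_exists p : inM0 p -> exists m, InCell m p.
Proof.
  destruct p as [p1 p2]. unfold inM0, inI, InCell; simpl. intros (H1 & H2 & H).
  destruct (Rle_dec (3 * p1) 1), (Rle_dec (3 * p1) 2), (Rle_dec (3 * p2) 1), (Rle_dec (3 * p2) 2);
  first [ exists m00; simpl; lra | exists m01; simpl; lra | exists m02; simpl; lra
        | exists m10; simpl; lra | exists m12; simpl; lra | exists m20; simpl; lra
        | exists m21; simpl; lra | exists m22; simpl; lra | exfalso; lra ].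
Qed.

Lemma cellOf_InCell p : inM0 p -> InCell (cellOf p) p.
Proof. intros Hp. unfold cellOf. apply epsilon_spec, InCell_exists, Hp. Qed.

Lemma lpos_inM0 m p : inM0 p -> InCell m p -> inM0 (lpos m p).
Proof. destruct p. unfold inM0, inI, InCell, lpos. destruct m; simpl; lra. Qed.

Lemma InCell_common_vertical i k r s : (i = 0 \/ i = 1) -> (k = 0 \/ k = 1 \/ k = 2) ->
  k / 3 <= r <= (k + 1) / 3 -> k / 3 <= s <= (k + 1) / 3 ->
  exists m, InCell m (i, r) /\ InCell m (i, s).
Proof.
  unfold InCell; simpl. intros [-> | ->] [-> | [-> | ->]] Hr Hs;
  first [ exists m00; simpl; lra | exists m01; simpl; lra | exists m02; simpl; lra
        | exists m20; simpl; lra | exists m21; simpl; lra | exists m22; simpl; lra ].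
Qed.

Lemma InCell_common_horizontal i k r s : (i = 0 \/ i = 1) -> (k = 0 \/ k = 1 \/ k = 2) ->
  k / 3 <= r <= (k + 1) / 3 -> k / 3 <= s <= (k + 1) / 3 ->
  exists m, InCell m (r, i) /\ InCell m (s, i).
Proof.
  unfold InCell; simpl. intros [-> | ->] [-> | [-> | ->]] Hr Hs;
  first [ exists m00; simpl; lra | exists m10; simpl; lra | exists m20; simpl; lra
        | exists m02; simpl; lra | exists m12; simpl; lra | exists m22; simpl; lra ].
Qed.

Section Tensor.
Variable X : SqMS.
Local Notation T := (car X).
Local Notation d := (sqd X).
Local Notation S := (sqS X).

Lemma d_nonneg x y : 0 <= d x y.
Proof. exact (met_nonneg _ _ (sq_metric _ _ _ (sq_ax X)) x y). Qed.

Lemma d_sym x y : d x y = d y x.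
Proof. exact (met_sym _ _ (sq_metric _ _ _ (sq_ax X)) x y). Qed.

Lemma d_tri x y z : d x z <= d x y + d y z.
Proof. exact (met_tri _ _ (sq_metric _ _ _ (sq_ax X)) x y z). Qed.

Lemma d_eq0 x y : d x y = 0 -> x = y.
Proof. apply (met_zero _ _ (sq_metric _ _ _ (sq_ax X))). Qed.

Lemma d_refl x : d x x = 0.
Proof. apply (met_zero _ _ (sq_metric _ _ _ (sq_ax X))). reflexivity. Qed.

Lemma l1dist_le_dS a b : inM0 a -> inM0 b -> l1dist a b <= d (S a) (S b).
Proof. intros Ha Hb. apply Rge_le, (sq2 _ _ _ (sq_ax X)); assumption. Qed.

Lemma dMX_nonneg z w : 0 <= dMX X z w.
Proof. unfold dMX. destruct Mpt_eq_dec; [pose proof (d_nonneg (snd z) (snd w))|]; lra. Qed.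

Lemma dMX_le2 z w : dMX X z w <= 2.
Proof.
  unfold dMX. destruct Mpt_eq_dec; [pose proof (sq_bound _ _ _ (sq_ax X) (snd z) (snd w))|]; lra.
Qed.

Lemma dMX_sym z w : dMX X z w = dMX X w z.
Proof. unfold dMX. do 2 destruct Mpt_eq_dec; try congruence. rewrite d_sym. reflexivity. Qed.

Lemma dMX_same_cell m u v : dMX X (m, u) (m, v) = d u v / 3.
Proof. unfold dMX; simpl. destruct Mpt_eq_dec; [lra | congruence]. Qed.

Lemma tsim_refl z : tsim X z z.
Proof. apply rst_refl. Qed.

Lemma tsim_sym z w : tsim X z w -> tsim X w z.
Proof. apply rst_sym. Qed.

Lemma tsim_trans x y z : tsim X x y -> tsim X y z -> tsim X x z.
Proof. apply rst_trans. Qed.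

Lemma step_cost_nonneg a b s : step_cost X a b s -> 0 <= s.
Proof. intros [[_ ->] | [_ ->]]; [lra | apply dMX_nonneg]. Qed.

Lemma step_cost_sym a b s : step_cost X a b s -> step_cost X b a s.
Proof.
  intros [[H ->] | [H ->]].
  - left. split; [apply tsim_sym, H | reflexivity].
  - right. split; [intros H'; apply H, tsim_sym, H' | apply dMX_sym].
Qed.

Lemma step_cost_le_dMX a b : exists s, step_cost X a b s /\ s <= dMX X a b.
Proof.
  destruct (classic (tsim X a b)).
  - exists 0. split; [left; auto | apply dMX_nonneg].
  - exists (dMX X a b). split; [right; auto | lra].
Qed.

Lemma ChainCost_nonneg z w c : ChainCost X z w c -> 0 <= c.
Proof.
  induction 1 as [|z0 z1 w s c Hs _ IH]; [lra | pose proof (step_cost_nonneg _ _ _ Hs); lra].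
Qed.

Lemma ChainCost_app x y z c c' :
  ChainCost X x y c -> ChainCost X y z c' -> ChainCost X x z (c + c').
Proof.
  induction 1 as [|z0 z1 w s c Hs _ IH]; intros H'.
  - rewrite Rplus_0_l. exact H'.
  - rewrite Rplus_assoc. econstructor; eauto.
Qed.

Lemma ChainCost_step a b s : step_cost X a b s -> ChainCost X a b s.
Proof. intros H. rewrite <- (Rplus_0_r s). econstructor; [exact H | constructor]. Qed.

Lemma ChainCost_rev z w c : ChainCost X z w c -> ChainCost X w z c.
Proof.
  induction 1 as [|z0 z1 w s c Hs _ IH]; [constructor|].
  rewrite Rplus_comm. apply ChainCost_app with z1; [exact IH|].
  apply ChainCost_step, step_cost_sym, Hs.
Qed.

Lemma qdist_spec z w :
  (forall c, ChainCost X z w c -> qdist X z w <= c) /\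
  (forall L, (forall c, ChainCost X z w c -> L <= c) -> L <= qdist X z w).
Proof.
  apply Glb_Rbar_nonneg_spec; [|apply ChainCost_nonneg].
  destruct (step_cost_le_dMX z w) as [s [Hs _]]. exists s. apply ChainCost_step, Hs.
Qed.

Lemma qdist_le_chain z w c : ChainCost X z w c -> qdist X z w <= c.
Proof. apply qdist_spec. Qed.

Lemma qdist_ge z w L : (forall c, ChainCost X z w c -> L <= c) -> L <= qdist X z w.
Proof. apply qdist_spec. Qed.

Lemma qdist_nonneg z w : 0 <= qdist X z w.
Proof. apply qdist_ge, ChainCost_nonneg. Qed.

Lemma qdist_refl z : qdist X z z = 0.
Proof. pose proof (qdist_le_chain z z 0 (cc_nil _ _)). pose proof (qdist_nonneg z z). lra. Qed.

Lemma qdist_sym z w : qdist X z w = qdist X w z.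
Proof.
  apply Rle_antisym; apply qdist_ge; intros c Hc; apply qdist_le_chain, ChainCost_rev, Hc.
Qed.

Lemma qdist_tri x y z : qdist X x z <= qdist X x y + qdist X y z.
Proof.
  assert (H : forall c, ChainCost X x y c -> qdist X x z - qdist X y z <= c).
  { intros c Hc. enough (qdist X x z - c <= qdist X y z) by lra.
    apply qdist_ge. intros c' Hc'.
    pose proof (qdist_le_chain _ _ _ (ChainCost_app _ _ _ _ _ Hc Hc')). lra. }
  pose proof (qdist_ge _ _ _ H). lra.
Qed.

Lemma qdist_le_step a b s : step_cost X a b s -> qdist X a b <= s.
Proof. intros H. apply qdist_le_chain, ChainCost_step, H. Qed.

Lemma qdist_le_dMX a b : qdist X a b <= dMX X a b.
Proof.
  destruct (step_cost_le_dMX a b) as [s [Hs Hle]]. pose proof (qdist_le_step _ _ _ Hs). lra.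
Qed.

Lemma qdist_tsim a b : tsim X a b -> qdist X a b = 0.
Proof.
  intros H. pose proof (qdist_le_step a b 0 (or_introl (conj H eq_refl))).
  pose proof (qdist_nonneg a b). lra.
Qed.

Lemma qdist_tsim_l z z' w : tsim X z z' -> qdist X z w = qdist X z' w.
Proof.
  intros H. pose proof (qdist_tri z z' w). pose proof (qdist_tri z' z w).
  rewrite (qdist_tsim _ _ H) in *. rewrite (qdist_tsim _ _ (tsim_sym _ _ H)) in *. lra.
Qed.

Lemma qdist_tsim_r z w w' : tsim X w w' -> qdist X z w = qdist X z w'.
Proof. intros H. rewrite (qdist_sym z w), (qdist_sym z w'). apply qdist_tsim_l, H. Qed.

Lemma qdist_potential_lb (f : Mpt * T -> R) :
  (forall a b s, step_cost X a b s -> f a - f b <= s) ->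
  forall z w, f z - f w <= qdist X z w.
Proof.
  intros Hf z w. apply qdist_ge.
  induction 1 as [|z0 z1 w s c Hs _ IH]; [lra | pose proof (Hf _ _ _ Hs); lra].
Qed.

Definition glued (z w : Mpt * T) : Prop :=
  exists a b, inM0 a /\ inM0 b /\ snd z = S a /\ snd w = S b /\ gpos (fst z) a = gpos (fst w) b.

Lemma tsim_eq_or_glued z w : tsim X z w -> z = w \/ glued z w.
Proof.
  induction 1 as [x y H | x | x y _ IH | x y z _ IH1 _ IH2].
  - right. destruct H as (a & b & Ha & Hb & _ & Ex & Ey & E1 & E2).
    exists a, b. unfold gpos. rewrite E1, E2. auto.
  - left. reflexivity.
  - destruct IH as [-> | (a & b & Ha & Hb & Ex & Ey & E)]; [left; reflexivity|].
    right. exists b, a. auto.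
  - destruct IH1 as [-> | (a & b & Ha & Hb & Ex & Ey & E)]; [exact IH2|].
    destruct IH2 as [<- | (b' & c & Hb' & Hc & Ey' & Ez & E')].
    + right. exists a, b. auto.
    + assert (b' = b) as ->
        by (apply (sq_inj _ _ _ (sq_ax X)); [exact Hb' | exact Hb | congruence]).
      right. exists a, c. refine (conj Ha (conj Hc (conj Ex (conj Ez _)))). congruence.
Qed.

Lemma chain_gpos_lb z w c : ChainCost X z w c ->
  forall n b, inM0 b -> w = (n, S b) ->
  forall a, inM0 a -> l1dist (gpos (fst z) a) (gpos n b) <= d (snd z) (S a) / 3 + c.
Proof.
  induction 1 as [z | z0 z1 w s c Hs Hc IH]; intros n b Hb Hw a Ha.
  - subst z; simpl. rewrite l1dist_gpos, d_sym.
    pose proof (l1dist_le_dS a b Ha Hb). lra.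
  - specialize (IH n b Hb Hw). pose proof (ChainCost_nonneg _ _ _ Hc).
    destruct Hs as [[Ht ->] | [_ ->]].
    + destruct (tsim_eq_or_glued _ _ Ht) as [<- | (a0 & a1 & Ha0 & Ha1 & E0 & E1 & E)].
      * specialize (IH a Ha). lra.
      * specialize (IH a1 Ha1). rewrite E1, d_refl, <- E in IH. rewrite E0.
        pose proof (l1dist_tri (gpos (fst z0) a) (gpos (fst z0) a0) (gpos n b)) as Htri.
        rewrite l1dist_gpos in Htri. pose proof (l1dist_le_dS a a0 Ha Ha0) as Hsq2.
        rewrite d_sym in Hsq2. lra.
    + unfold dMX. destruct Mpt_eq_dec as [e | ne].
      * specialize (IH a Ha). rewrite e.
        pose proof (d_tri (snd z1) (snd z0) (S a)) as Htri.
        rewrite (d_sym (snd z1) (snd z0)) in Htri. lra.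
      * pose proof (l1dist_gpos_le2 (fst z0) a n b Ha Hb).
        pose proof (d_nonneg (snd z0) (S a)). lra.
Qed.

Lemma qdist_gpos_lb m a n b : inM0 a -> inM0 b ->
  l1dist (gpos m a) (gpos n b) <= qdist X (m, S a) (n, S b).
Proof.
  intros Ha Hb. apply qdist_ge. intros c Hc.
  pose proof (chain_gpos_lb _ _ _ Hc n b Hb eq_refl a Ha) as H. simpl in H.
  rewrite d_refl in H. lra.
Qed.

Lemma tsim_adjacent m n a b : adjM m n -> inM0 a -> inM0 b -> gpos m a = gpos n b ->
  tsim X (m, S a) (n, S b).
Proof.
  intros Hmn Ha Hb E. unfold gpos in E. injection E as E1 E2.
  apply rst_step. exists a, b. simpl. auto 7.
Qed.

Ltac tsim_adjacent_by_cases :=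
  apply tsim_adjacent;
  [ unfold adjM; simpl; split_Rabs; lra
  | unfold inM0, inI, lpos, gpos; simpl; lra
  | unfold inM0, inI, lpos, gpos; simpl; lra
  | unfold lpos, gpos; simpl; f_equal; lra ].

Ltac tsim_via_corner k :=
  match goal with |- tsim _ (?m, sqS _ ?a) _ =>
    apply tsim_trans with (k, sqS _ (lpos k (gpos m a))); tsim_adjacent_by_cases end.

(* Two cells meeting at a point are equal, adjacent, or diagonal neighbours meeting at a corner
   of the missing middle cell, in which case a corner cell of M is adjacent to both. *)
Lemma tsim_of_gpos_eq m n a b : inM0 a -> inM0 b -> gpos m a = gpos n b ->
  tsim X (m, S a) (n, S b).
Proof.
  destruct a as [a1 a2], b as [b1 b2]. intros Ha Hb E.
  pose proof Ha as Ha'. pose proof Hb as Hb'. unfold inM0, inI in Ha', Hb'. simpl in Ha', Hb'.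
  unfold gpos in E. injection E as E1 E2.
  destruct m, n; simpl in E1, E2;
  first
  [ exfalso; lra
  | replace (b1, b2) with (a1, a2) by (f_equal; lra); apply tsim_refl
  | tsim_adjacent_by_cases
  | tsim_via_corner m00 | tsim_via_corner m02 | tsim_via_corner m20 | tsim_via_corner m22 ].
Qed.

Lemma path_dist_pos (v : T) (g : R -> T) :
  (forall s t, inI s -> inI t -> d (g s) (g t) <= Rabs (t - s)) ->
  (forall t, inI t -> g t <> v) ->
  exists delta, 0 < delta /\ forall t, inI t -> delta <= d v (g t).
Proof.
  intros Hg Hv.
  set (h t := d v (g (clamp01 t))).
  assert (Hh : forall x, continuity_pt h x).
  { apply short_continuity_pt. intros x y. unfold h.
    pose proof (d_tri v (g (clamp01 y)) (g (clamp01 x))) as Htri.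
    pose proof (d_tri v (g (clamp01 x)) (g (clamp01 y))).
    pose proof (Hg (clamp01 x) (clamp01 y) (clamp01_inI x) (clamp01_inI y)).
    rewrite (d_sym (g (clamp01 y))) in Htri.
    pose proof (clamp01_short y x). split_Rabs; lra. }
  destruct (continuity_ab_min h 0 1) as [t0 [Hmin Ht0]]; [lra | intros; apply Hh |].
  exists (h t0). split.
  - destruct (Rle_lt_or_eq_dec _ _ (d_nonneg v (g (clamp01 t0)))) as [Hlt | Heq]; [exact Hlt|].
    exfalso. apply (Hv (clamp01 t0) (clamp01_inI t0)). symmetry. apply d_eq0. auto.
  - intros t Ht. specialize (Hmin t Ht). unfold h at 2 in Hmin. rewrite clamp01_id in Hmin; auto.
Qed.

Lemma dist_S_M0_pos (v : T) : (forall a, inM0 a -> S a <> v) ->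
  exists delta, 0 < delta /\ forall a, inM0 a -> delta <= d v (S a).
Proof.
  intros Hv.
  assert (Hside : forall e : R -> R * R,
    (forall t, inI t -> inM0 (e t)) ->
    (forall s t, inI s -> inI t -> d (S (e s)) (S (e t)) = Rabs (t - s)) ->
    exists delta, 0 < delta /\ forall t, inI t -> delta <= d v (S (e t))).
  { intros e He Hd. apply path_dist_pos.
    - intros s t Hs Ht. rewrite Hd; auto. lra.
    - intros t Ht. apply Hv, He, Ht. }
  destruct (Hside (fun t => (0, t))) as [d1 [P1 Q1]];
    [intros; apply inM0_vertical; auto | intros; apply (sq1_v _ _ _ (sq_ax X)); auto |].
  destruct (Hside (fun t => (1, t))) as [d2 [P2 Q2]];
    [intros; apply inM0_vertical; auto | intros; apply (sq1_v _ _ _ (sq_ax X)); auto |].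
  destruct (Hside (fun t => (t, 0))) as [d3 [P3 Q3]];
    [intros; apply inM0_horizontal; auto | intros; apply (sq1_h _ _ _ (sq_ax X)); auto |].
  destruct (Hside (fun t => (t, 1))) as [d4 [P4 Q4]];
    [intros; apply inM0_horizontal; auto | intros; apply (sq1_h _ _ _ (sq_ax X)); auto |].
  exists (Rmin (Rmin d1 d2) (Rmin d3 d4)). split.
  - unfold Rmin. repeat destruct Rle_dec; lra.
  - intros [a1 a2] (Ha1 & Ha2 & Hside'). simpl in *.
    pose proof (Rmin_l (Rmin d1 d2) (Rmin d3 d4)). pose proof (Rmin_r (Rmin d1 d2) (Rmin d3 d4)).
    pose proof (Rmin_l d1 d2). pose proof (Rmin_r d1 d2).
    pose proof (Rmin_l d3 d4). pose proof (Rmin_r d3 d4).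
    destruct Hside' as [-> | [-> | [-> | ->]]];
      [ specialize (Q1 a2 Ha2) | specialize (Q2 a2 Ha2)
      | specialize (Q3 a1 Ha1) | specialize (Q4 a1 Ha1) ];
      simpl in *; lra.
Qed.

(* The potential [min(delta, d(., v))/3] on the copy of [v], and [delta/3] elsewhere, changes
   by at most the cost of any step: glued points are S-points, where it equals [delta/3]. *)
Lemma qdist_eq0_off_S z n v : (forall a, inM0 a -> S a <> v) ->
  qdist X z (n, v) = 0 -> z = (n, v).
Proof.
  intros Hv H0.
  destruct (dist_S_M0_pos v Hv) as [delta [Hdelta Hdelta_le]].
  assert (Hdelta2 : delta <= 2).
  { assert (H00 : inM0 (0, 0)) by (apply inM0_vertical; unfold inI; lra).
    pose proof (Hdelta_le _ H00). pose proof (sq_bound _ _ _ (sq_ax X) v (S (0, 0))). lra. }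
  set (f u := if Mpt_eq_dec (fst u) n then Rmin delta (d (snd u) v) / 3 else delta / 3).
  assert (Hf_S : forall u a, inM0 a -> snd u = S a -> f u = delta / 3).
  { intros u a Ha E. unfold f. destruct Mpt_eq_dec; [|reflexivity].
    rewrite E, d_sym. rewrite Rmin_left; [reflexivity | apply Hdelta_le, Ha]. }
  assert (Hf_range : forall u, 0 <= f u <= delta / 3).
  { intros u. unfold f. destruct Mpt_eq_dec; [|lra].
    pose proof (d_nonneg (snd u) v). unfold Rmin. destruct Rle_dec; lra. }
  assert (Hf_step : forall a b s, step_cost X a b s -> f a - f b <= s).
  { intros a b s [[Ht ->] | [_ ->]].
    - destruct (tsim_eq_or_glued _ _ Ht) as [<- | (a0 & a1 & Ha0 & Ha1 & E0 & E1 & _)]; [lra|].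
      rewrite (Hf_S a a0), (Hf_S b a1); auto. lra.
    - unfold dMX. destruct (Mpt_eq_dec (fst a) (fst b)) as [e | ne].
      + unfold f. rewrite e.
        pose proof (d_tri (snd a) (snd b) v). pose proof (d_nonneg (snd a) (snd b)).
        destruct Mpt_eq_dec; [|lra]. unfold Rmin. repeat destruct Rle_dec; lra.
      + pose proof (Hf_range a). pose proof (Hf_range b). lra. }
  pose proof (qdist_potential_lb f Hf_step z (n, v)) as H.
  rewrite H0 in H. unfold f in H at 2. simpl in H.
  destruct Mpt_eq_dec as [_ | ne]; [|congruence]. rewrite d_refl in H.
  unfold f in H. destruct z as [m u]. simpl in H. destruct Mpt_eq_dec as [-> | ne].
  - f_equal. apply d_eq0.
    pose proof (d_nonneg u v). revert H. unfold Rmin. repeat destruct Rle_dec; lra.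
  - exfalso. revert H. unfold Rmin. repeat destruct Rle_dec; lra.
Qed.

Lemma qdist_eq0_tsim z w : qdist X z w = 0 -> tsim X z w.
Proof.
  intros H0. destruct z as [m u], w as [n v].
  destruct (classic (exists b, inM0 b /\ v = S b)) as [[b [Hb ->]] | Hv].
  - destruct (classic (exists a, inM0 a /\ u = S a)) as [[a [Ha ->]] | Hu].
    + apply tsim_of_gpos_eq; auto. apply l1dist_le0.
      rewrite <- H0. apply qdist_gpos_lb; auto.
    + rewrite qdist_sym in H0. apply qdist_eq0_off_S in H0.
      * rewrite H0. apply tsim_refl.
      * intros a Ha E. apply Hu. eauto.
  - apply qdist_eq0_off_S in H0.
    + rewrite H0. apply tsim_refl.
    + intros b Hb E. apply Hv. eauto.
Qed.

Lemma cls_eq z w : tsim X z w -> cls X z = cls X w.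
Proof.
  intros H. apply subset_eq_compat, functional_extensionality. intros u.
  apply propositional_extensionality. split; intros Hu.
  - apply tsim_trans with z; [apply tsim_sym, H | exact Hu].
  - apply tsim_trans with w; [exact H | exact Hu].
Qed.

Lemma cls_rep c : cls X (rep X c) = c.
Proof.
  destruct c as [P HP]. unfold rep, cls; simpl.
  destruct (constructive_indefinite_description _ HP) as [z ->]. simpl.
  apply subset_eq_compat. reflexivity.
Qed.

Lemma tsim_rep_cls z : tsim X z (rep X (cls X z)).
Proof.
  unfold rep. destruct (constructive_indefinite_description _ _) as [z' Hz']. simpl in *.
  rewrite Hz'. apply tsim_refl.
Qed.

Lemma MTdist_cls z w : MTdist X (cls X z) (cls X w) = qdist X z w.
Proof.
  unfold MTdist. rewrite <- (qdist_tsim_l _ _ _ (tsim_rep_cls z)).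
  apply eq_sym, qdist_tsim_r, tsim_rep_cls.
Qed.

Lemma MT_metric : IsMetric (MT X) (MTdist X).
Proof.
  split.
  - intros; apply qdist_nonneg.
  - intros c c'. split.
    + intros H. rewrite <- (cls_rep c), <- (cls_rep c'). apply cls_eq, qdist_eq0_tsim, H.
    + intros ->. apply qdist_refl.
  - intros; apply qdist_sym.
  - intros; apply qdist_tri.
Qed.

Lemma MTS_cell p m : inM0 p -> InCell m p -> MTS X p = cls X (m, S (lpos m p)).
Proof.
  intros Hp Hm. apply cls_eq.
  change (tsim X (cellOf p, S (lpos (cellOf p) p)) (m, S (lpos m p))).
  apply tsim_of_gpos_eq;
    [apply lpos_inM0, cellOf_InCell; assumption | apply lpos_inM0; assumption |].
  rewrite !gpos_lpos. reflexivity.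
Qed.

Lemma l1dist_le_MTdist_MTS p q : inM0 p -> inM0 q ->
  l1dist p q <= MTdist X (MTS X p) (MTS X q).
Proof.
  intros Hp Hq. destruct (InCell_exists p Hp) as [m Hm], (InCell_exists q Hq) as [n Hn].
  rewrite (MTS_cell p m), (MTS_cell q n), MTdist_cls by assumption.
  pose proof (qdist_gpos_lb m (lpos m p) n (lpos n q)) as H.
  rewrite !gpos_lpos in H. apply H; apply lpos_inM0; assumption.
Qed.

Lemma MTdist_MTS_same_cell p q m : inM0 p -> inM0 q -> InCell m p -> InCell m q ->
  MTdist X (MTS X p) (MTS X q) <= d (S (lpos m p)) (S (lpos m q)) / 3.
Proof.
  intros. rewrite (MTS_cell p m), (MTS_cell q m), MTdist_cls, <- (dMX_same_cell m) by assumption.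
  apply qdist_le_dMX.
Qed.

Lemma MTdist_MTS_vertical_le i r s m : (i = 0 \/ i = 1) -> inI r -> inI s ->
  InCell m (i, r) -> InCell m (i, s) -> MTdist X (MTS X (i, r)) (MTS X (i, s)) <= Rabs (s - r).
Proof.
  intros Hi Hr Hs Hmr Hms.
  eapply Rle_trans; [apply (MTdist_MTS_same_cell _ _ m); try apply inM0_vertical; assumption|].
  unfold InCell, inI, lpos in *; simpl in *.
  rewrite (sq1_v _ _ _ (sq_ax X));
    [split_Rabs; lra | destruct m; simpl in *; lra | unfold inI; lra | unfold inI; lra].
Qed.

Lemma MTdist_MTS_horizontal_le i r s m : (i = 0 \/ i = 1) -> inI r -> inI s ->
  InCell m (r, i) -> InCell m (s, i) -> MTdist X (MTS X (r, i)) (MTS X (s, i)) <= Rabs (s - r).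
Proof.
  intros Hi Hr Hs Hmr Hms.
  eapply Rle_trans; [apply (MTdist_MTS_same_cell _ _ m); try apply inM0_horizontal; assumption|].
  unfold InCell, inI, lpos in *; simpl in *.
  rewrite (sq1_h _ _ _ (sq_ax X));
    [split_Rabs; lra | destruct m; simpl in *; lra | unfold inI; lra | unfold inI; lra].
Qed.

Lemma MT_sq1_v i r s : (i = 0 \/ i = 1) -> inI r -> inI s ->
  MTdist X (MTS X (i, r)) (MTS X (i, s)) = Rabs (s - r).
Proof.
  intros Hi Hr Hs. apply Rle_antisym.
  - apply (short_by_thirds (fun r s => MTdist X (MTS X (i, r)) (MTS X (i, s)))); auto.
    + intros; apply (met_tri _ _ MT_metric).
    + intros k r' s' Hk Hr' Hs'.
      destruct (InCell_common_vertical i k r' s') as [m [Hmr Hms]]; auto.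
      apply (MTdist_MTS_vertical_le i r' s' m); auto; unfold inI; lra.
  - pose proof (l1dist_le_MTdist_MTS (i, r) (i, s)) as H.
    unfold l1dist in H; simpl in H. rewrite Rminus_diag, Rabs_R0, Rplus_0_l, Rabs_minus_sym in H.
    apply H; apply inM0_vertical; auto.
Qed.

Lemma MT_sq1_h i r s : (i = 0 \/ i = 1) -> inI r -> inI s ->
  MTdist X (MTS X (r, i)) (MTS X (s, i)) = Rabs (s - r).
Proof.
  intros Hi Hr Hs. apply Rle_antisym.
  - apply (short_by_thirds (fun r s => MTdist X (MTS X (r, i)) (MTS X (s, i)))); auto.
    + intros; apply (met_tri _ _ MT_metric).
    + intros k r' s' Hk Hr' Hs'.
      destruct (InCell_common_horizontal i k r' s') as [m [Hmr Hms]]; auto.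
      apply (MTdist_MTS_horizontal_le i r' s' m); auto; unfold inI; lra.
  - pose proof (l1dist_le_MTdist_MTS (r, i) (s, i)) as H.
    unfold l1dist in H; simpl in H. rewrite Rminus_diag, Rabs_R0, Rplus_0_r, Rabs_minus_sym in H.
    apply H; apply inM0_horizontal; auto.
Qed.

Lemma MT_sq : IsSqMS (MT X) (MTdist X) (MTS X).
Proof.
  split.
  - exact MT_metric.
  - intros c c'. unfold MTdist. eapply Rle_trans; [apply qdist_le_dMX | apply dMX_le2].
  - intros p q Hp Hq E. apply l1dist_le0.
    rewrite <- (proj2 (met_zero _ _ MT_metric (MTS X p) (MTS X q)) E).
    apply l1dist_le_MTdist_MTS; assumption.
  - exact MT_sq1_v.
  - exact MT_sq1_h.
  - intros p q Hp Hq. apply Rle_ge, l1dist_le_MTdist_MTS; assumption.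
Qed.

End Tensor.

Section Functor.
Variables X Y : SqMS.
Variable f : car X -> car Y.
Hypothesis f_hom : IsHom (car X) (car Y) (sqd X) (sqd Y) (sqS X) (sqS Y) f.

Definition map_pt (z : Mpt * car X) : Mpt * car Y := (fst z, f (snd z)).

Lemma tsim_map_pt z w : tsim X z w -> tsim Y (map_pt z) (map_pt w).
Proof.
  induction 1 as [z w H | z | z w _ IH | x y z _ IH1 _ IH2].
  - apply rst_step. destruct H as (a & b & Ha & Hb & Hadj & Ez & Ew & E1 & E2).
    exists a, b. unfold map_pt; simpl. rewrite Ez, Ew, !(proj2 f_hom) by assumption. auto 7.
  - apply tsim_refl.
  - apply tsim_sym, IH.
  - apply tsim_trans with (map_pt y); assumption.
Qed.

Lemma qdist_map_pt z w : qdist Y (map_pt z) (map_pt w) <= qdist X z w.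
Proof.
  assert (Hstep : forall a b s, step_cost X a b s -> qdist Y (map_pt a) (map_pt b) <= s).
  { intros a b s [[Ht ->] | [_ ->]].
    - rewrite (qdist_tsim Y _ _ (tsim_map_pt _ _ Ht)). lra.
    - eapply Rle_trans; [apply qdist_le_dMX|]. unfold dMX, map_pt; simpl.
      destruct Mpt_eq_dec; [|lra]. pose proof (proj1 f_hom (snd a) (snd b)). lra. }
  assert (Hpot : forall a b s, step_cost X a b s ->
    qdist Y (map_pt a) (map_pt w) - qdist Y (map_pt b) (map_pt w) <= s).
  { intros a b s Hs. pose proof (qdist_tri Y (map_pt a) (map_pt b) (map_pt w)).
    pose proof (Hstep a b s Hs). lra. }
  pose proof (qdist_potential_lb X (fun u => qdist Y (map_pt u) (map_pt w)) Hpot z w) as H.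
  simpl in H. rewrite qdist_refl in H. lra.
Qed.

Lemma MTmap_cls m x : MTmap X Y f (cls X (m, x)) = cls Y (m, f x).
Proof. apply cls_eq, tsim_sym, (tsim_map_pt (m, x)), tsim_rep_cls. Qed.

Lemma MTmap_hom : IsHom (MT X) (MT Y) (MTdist X) (MTdist Y) (MTS X) (MTS Y) (MTmap X Y f).
Proof.
  split.
  - intros c c'. unfold MTmap at 1 2. rewrite MTdist_cls. apply qdist_map_pt.
  - intros p Hp. pose proof (cellOf_InCell p Hp) as Hc.
    rewrite (MTS_cell X p (cellOf p)), (MTS_cell Y p (cellOf p)), MTmap_cls by assumption.
    rewrite (proj2 f_hom); [reflexivity | apply lpos_inM0; assumption].
Qed.

End Functor.

Lemma MTmap_id X c : MTmap X X (fun x => x) c = c.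
Proof. unfold MTmap. rewrite <- surjective_pairing. apply cls_rep. Qed.

Lemma MTmap_comp X Y Z (f : car X -> car Y) (g : car Y -> car Z) :
  IsHom (car Y) (car Z) (sqd Y) (sqd Z) (sqS Y) (sqS Z) g ->
  forall c, MTmap X Z (fun x => g (f x)) c = MTmap Y Z g (MTmap X Y f c).
Proof. intros Hg c. unfold MTmap at 3. rewrite MTmap_cls; auto. Qed.

Theorem mainTheorem10 :
  forall X : SqMS,
    (* the quotient distance is a metric and (M (x) X, S) is a square metric space *)
    (* the quotient distance d(m (x) x, n (x) y) is the chain infimum, independent of representatives *)
    (forall z w, MTdist X (cls X z) (cls X w) = qdist X z w) /\
    IsMetric (MT X) (MTdist X) /\
    IsSqMS (MT X) (MTdist X) (MTS X) /\
    (* S_{M (x) X}(p) = m (x) S_X(3p - m) for ANY admissible m *)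
    (forall p m, inM0 p -> InCell m p ->
       MTS X p = cls X (m, sqS X (3 * fst p - mx m, 3 * snd p - my m))) /\
    (* M (x) f is a morphism, given by m (x) x |-> m (x) f x *)
    (forall (Y : SqMS) (f : car X -> car Y),
       IsHom (car X) (car Y) (sqd X) (sqd Y) (sqS X) (sqS Y) f ->
       IsHom (MT X) (MT Y) (MTdist X) (MTdist Y) (MTS X) (MTS Y) (MTmap X Y f) /\
       (forall m x, MTmap X Y f (cls X (m, x)) = cls Y (m, f x))) /\
    (* identities are preserved *)
    (forall c : MT X, MTmap X X (fun x => x) c = c) /\
    (* composition is preserved *)
    (forall (Y Z : SqMS) (f : car X -> car Y) (g : car Y -> car Z),
       IsHom (car X) (car Y) (sqd X) (sqd Y) (sqS X) (sqS Y) f ->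
       IsHom (car Y) (car Z) (sqd Y) (sqd Z) (sqS Y) (sqS Z) g ->
       forall c : MT X, MTmap X Z (fun x => g (f x)) c = MTmap Y Z g (MTmap X Y f c)).
Proof.
  intros X.
  split; [apply MTdist_cls|]. split; [apply MT_metric|]. split; [apply MT_sq|].
  split; [intros p m; apply MTS_cell|].
  split; [intros Y f Hf; split; [apply MTmap_hom | apply MTmap_cls]; exact Hf|].
  split; [apply MTmap_id|].
  intros Y Z f g _ Hg. apply MTmap_comp, Hg.
Qed.
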